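(* For every fixed $t\in\mathcal{T}$, every fixed $y_0$, and with the remaining arguments held fixed, the state-of-charge functional $y(x^0,x^\uparrow,x^\downarrow,\xi,y_0,t)$ is concave and decreasing in $x^0\in\mathcal{F}(\mathcal{T},\mathbb{R})$, concave and nonincreasing in $x^\uparrow\in\mathcal{F}(\mathcal{T},\mathbb{R}_+)$, concave and nondecreasing in $x^\downarrow\in\mathcal{F}(\mathcal{T},\mathbb{R}_+)$, and nonincreasing in $\xi\in\mathcal{R}(\mathcal{T},[-1,1])$. Monotonicity is with respect to the pointwise order on functions, and concavity refers to the vector-space structure of the corresponding function spaces.
   Context: Fix a positive integer $K$, $\Delta t>0$, $T=K\Delta t$ and $\mathcal{T}=[0,T]$. Partition $\mathcal{T}$ into the intervals $\mathcal{T}_k=[(k-1)\Delta t,k\Delta t)$ for $k<K$ and $\mathcal{T}_K=[T-\Delta t,T]$. For $U\subseteq\mathbb{R}$, let $\mathcal{F}(\mathcal{T},U)$ be the set of functions $\mathcal{T}\to U$ that are constant on each $\mathcal{T}_k$, and let $\mathcal{R}(\mathcal{T},U)$ be the set of Riemann integrable functions $\mathcal{T}\to U$. Write $[z]^+=\max\{z,0\}$ and $[z]^-=\max\{-z,0\}$. Let $\eta^{c},\eta^{d}\in(0,1)$ be the charging and discharging efficiencies and let $y_0\ge 0$. The power output is $x(a,b,c,s)=a+[s]^+b-[s]^-c$ for $a\in\mathbb{R}$, $b,c\ge0$, $s\in\mathbb{R}$. For $x^0\in\mathcal{F}(\mathcal{T},\mathbb{R})$, $x^\uparrow,x^\downarrow\in\mathcal{F}(\mathcal{T},\mathbb{R}_+)$,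 $\xi\in\mathcal{R}(\mathcal{T},[-1,1])$ and $t\in\mathcal{T}$, the state of charge is $$y(x^0,x^\uparrow,x^\downarrow,\xi,y_0,t)=y_0+\int_0^t \eta^{c}\big[x(x^0(\tau),x^\uparrow(\tau),x^\downarrow(\tau),\xi(\tau))\big]^- -\frac{1}{\eta^{d}}\big[x(x^0(\tau),x^\uparrow(\tau),x^\downarrow(\tau),\xi(\tau))\big]^+\,d\tau .$$ *)

From Stdlib Require Import Reals Lra.
From Coquelicot Require Import Coquelicot.
Open Scope R_scope.

Definition posp (z : R) : R := Rmax z 0.
Definition negp (z : R) : R := Rmax (- z) 0.

Definition xout (a b c s : R) : R := a + posp s * b - negp s * c.

(* T_k = [(k-1)dt, k dt) for k < K, T_K = [T - dt, T]  (k = 1..K) *)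
Definition in_Tk (K : nat) (dt : R) (k : nat) (s : R) : Prop :=
  (INR k - 1) * dt <= s /\ (s < INR k * dt \/ (k = K /\ s <= INR k * dt)).

Definition in_horizon (K : nat) (dt : R) (s : R) : Prop := 0 <= s <= INR K * dt.

(* f in F(T, U): constant on each T_k and valued in U on [0,T]
   (functions are represented as R -> R; only values on [0,T] matter) *)
Definition in_F (K : nat) (dt : R) (U : R -> Prop) (f : R -> R) : Prop :=
  (forall s, in_horizon K dt s -> U (f s)) /\
  (forall k, (1 <= k <= K)%nat -> forall s u,
      in_Tk K dt k s -> in_Tk K dt k u -> f s = f u).

Definition in_Riem (K : nat) (dt : R) (U : R -> Prop) (f : R -> R) : Prop :=
  ex_RInt f 0 (INR K * dt) /\ (forall s, in_horizon K dt s -> U (f s)).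

Definition allR (z : R) : Prop := True.
Definition nonnegR (z : R) : Prop := 0 <= z.
Definition unit_box (z : R) : Prop := -1 <= z <= 1.

Definition soc (etac etad : R) (x0 xu xd xi : R -> R) (y0 t : R) : R :=
  y0 + RInt (fun tau =>
        etac * negp (xout (x0 tau) (xu tau) (xd tau) (xi tau))
        - / etad * posp (xout (x0 tau) (xu tau) (xd tau) (xi tau))) 0 t.

Definition le_on (K : nat) (dt : R) (f g : R -> R) : Prop :=
  forall s, in_horizon K dt s -> f s <= g s.

Definition concave_on (S : (R -> R) -> Prop) (Phi : (R -> R) -> R) : Prop :=
  forall f g (l : R), S f -> S g -> 0 <= l <= 1 ->
    l * Phi f + (1 - l) * Phi g <= Phi (fun s => l * f s + (1 - l) * g s).

Definition nonincreasing_on (K : nat) (dt : R) (S : (R -> R) -> Prop)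
    (Phi : (R -> R) -> R) : Prop :=
  forall f g, S f -> S g -> le_on K dt f g -> Phi g <= Phi f.

Definition nondecreasing_on (K : nat) (dt : R) (S : (R -> R) -> Prop)
    (Phi : (R -> R) -> R) : Prop :=
  forall f g, S f -> S g -> le_on K dt f g -> Phi f <= Phi g.

(** Write [psi z = etac [z]^- - [z]^+ / etad], so that [y = y0 + int_0^t psi (x tau) dtau].
    Since [0 <= etac <= 1 <= 1 / etad], [psi z = min (- etac z, - z / etad)] is a minimum of
    two nonincreasing linear maps, hence concave and nonincreasing.  The power output
    [x(a,b,c,s) = a + [s]^+ b - [s]^- c] is affine in each of [a], [b], [c], nondecreasing in
    [a] and [b], nonincreasing in [c], and nondecreasing in [s] when [b, c >= 0].  Composing
    with [psi] and integrating (a monotone linear operation) yields every claim.  The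
    integrals exist because [x^0, x^up, x^down] are constant on each [T_k], and [[.]^+],
    [[.]^-] preserve Riemann integrability since [z^+ = (z + |z|) / 2]. *)
From Stdlib Require Import Reals Lra Lia.
From Coquelicot Require Import Coquelicot.
Open Scope R_scope.

Lemma posp_ge0 z : 0 <= posp z.
Proof. apply Rmax_r. Qed.

Lemma negp_ge0 z : 0 <= negp z.
Proof. apply Rmax_r. Qed.

Lemma posp_Rabs z : posp z = (z + Rabs z) / 2.
Proof. unfold posp, Rmax, Rabs; destruct Rle_dec, Rcase_abs; lra. Qed.

Lemma negp_Rabs z : negp z = (Rabs z - z) / 2.
Proof. unfold negp, Rmax, Rabs; destruct Rle_dec, Rcase_abs; lra. Qed.

Definition soc_rate (etac etad z : R) : R := etac * negp z - / etad * posp z.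

Section SocRate.

Variables etac etad : R.
Hypotheses (etac_ge0 : 0 <= etac) (etac_le_inv_etad : etac <= / etad).

Lemma soc_rate_Rmin z : soc_rate etac etad z = Rmin (- etac * z) (- / etad * z).
Proof. unfold soc_rate, negp, posp, Rmin, Rmax; repeat destruct Rle_dec; nra. Qed.

Lemma soc_rate_nonincreasing z1 z2 :
  z1 <= z2 -> soc_rate etac etad z2 <= soc_rate etac etad z1.
Proof. intros; rewrite !soc_rate_Rmin; unfold Rmin; repeat destruct Rle_dec; nra. Qed.

Lemma soc_rate_concave z1 z2 l : 0 <= l <= 1 ->
  l * soc_rate etac etad z1 + (1 - l) * soc_rate etac etad z2
    <= soc_rate etac etad (l * z1 + (1 - l) * z2).
Proof.
  intros Hl; rewrite !soc_rate_Rmin; apply Rmin_glb.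
  - pose proof (Rmin_l (- etac * z1) (- / etad * z1)).
    pose proof (Rmin_l (- etac * z2) (- / etad * z2)); nra.
  - pose proof (Rmin_r (- etac * z1) (- / etad * z1)).
    pose proof (Rmin_r (- etac * z2) (- / etad * z2)); nra.
Qed.

End SocRate.

Lemma xout_comb_l l a1 a2 b c s :
  xout (l * a1 + (1 - l) * a2) b c s = l * xout a1 b c s + (1 - l) * xout a2 b c s.
Proof. unfold xout; ring. Qed.

Lemma xout_comb_m l a b1 b2 c s :
  xout a (l * b1 + (1 - l) * b2) c s = l * xout a b1 c s + (1 - l) * xout a b2 c s.
Proof. unfold xout; ring. Qed.

Lemma xout_comb_r l a b c1 c2 s :
  xout a b (l * c1 + (1 - l) * c2) s = l * xout a b c1 s + (1 - l) * xout a b c2 s.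
Proof. unfold xout; ring. Qed.

Lemma xout_le_l a1 a2 b c s : a1 <= a2 -> xout a1 b c s <= xout a2 b c s.
Proof. unfold xout; lra. Qed.

Lemma xout_le_m a b1 b2 c s : b1 <= b2 -> xout a b1 c s <= xout a b2 c s.
Proof. pose proof (posp_ge0 s); unfold xout; nra. Qed.

Lemma xout_le_r a b c1 c2 s : c1 <= c2 -> xout a b c2 s <= xout a b c1 s.
Proof. pose proof (negp_ge0 s); unfold xout; nra. Qed.

Lemma xout_le_s a b c s1 s2 : 0 <= b -> 0 <= c -> s1 <= s2 ->
  xout a b c s1 <= xout a b c s2.
Proof. unfold xout, posp, negp, Rmax; repeat destruct Rle_dec; nra. Qed.

Lemma ex_RInt_Rmult_l (f : R -> R) a b k :
  ex_RInt f a b -> ex_RInt (fun x => k * f x) a b.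
Proof. exact (ex_RInt_scal f a b k). Qed.

Lemma ex_RInt_ext_R (f g : R -> R) a b :
  (forall x, f x = g x) -> ex_RInt f a b -> ex_RInt g a b.
Proof. intros Hfg; apply ex_RInt_ext; intros x _; apply Hfg. Qed.

Lemma ex_RInt_posp (f : R -> R) a b : ex_RInt f a b -> ex_RInt (fun x => posp (f x)) a b.
Proof.
  intros Hf; apply (ex_RInt_ext_R (fun x => / 2 * (f x + Rabs (f x)))).
  - intros x; rewrite posp_Rabs; lra.
  - exact (ex_RInt_Rmult_l _ _ _ _ (ex_RInt_plus _ _ _ _ Hf (ex_RInt_norm _ _ _ Hf))).
Qed.

Lemma ex_RInt_negp (f : R -> R) a b : ex_RInt f a b -> ex_RInt (fun x => negp (f x)) a b.
Proof.
  intros Hf; apply (ex_RInt_ext_R (fun x => / 2 * (Rabs (f x) - f x))).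
  - intros x; rewrite negp_Rabs; lra.
  - exact (ex_RInt_Rmult_l _ _ _ _ (ex_RInt_minus _ _ _ _ (ex_RInt_norm _ _ _ Hf) Hf)).
Qed.

Lemma ex_RInt_lincomb (f g : R -> R) a b p q :
  ex_RInt f a b -> ex_RInt g a b -> ex_RInt (fun x => p * f x + q * g x) a b.
Proof.
  intros Hf Hg.
  exact (ex_RInt_plus _ _ _ _ (ex_RInt_Rmult_l _ _ _ p Hf) (ex_RInt_Rmult_l _ _ _ q Hg)).
Qed.

Lemma RInt_lincomb (f g : R -> R) a b p q :
  ex_RInt f a b -> ex_RInt g a b ->
  RInt (fun x => p * f x + q * g x) a b = p * RInt f a b + q * RInt g a b.
Proof.
  intros Hf Hg.
  rewrite (RInt_plus (V := R_CompleteNormedModule) (fun x => p * f x) (fun x => q * g x));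
    [|exact (ex_RInt_Rmult_l _ _ _ p Hf)|exact (ex_RInt_Rmult_l _ _ _ q Hg)].
  exact (f_equal2 Rplus (RInt_scal (V := R_CompleteNormedModule) f a b p Hf)
                        (RInt_scal (V := R_CompleteNormedModule) g a b q Hg)).
Qed.

Lemma ex_RInt_xout (xi : R -> R) a b c l r :
  ex_RInt xi l r -> ex_RInt (fun s => xout a b c (xi s)) l r.
Proof.
  intros Hxi; apply (ex_RInt_ext_R (fun s => a + (b * posp (xi s) + (- c) * negp (xi s)))).
  - intros s; unfold xout; ring.
  - exact (ex_RInt_plus _ _ _ _ (ex_RInt_const _ _ a)
             (ex_RInt_lincomb _ _ _ _ _ _ (ex_RInt_posp _ _ _ Hxi) (ex_RInt_negp _ _ _ Hxi))).
Qed.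

Lemma ex_RInt_soc_rate etac etad (f : R -> R) l r :
  ex_RInt f l r -> ex_RInt (fun s => soc_rate etac etad (f s)) l r.
Proof.
  intros Hf; apply (ex_RInt_ext_R (fun s => etac * negp (f s) + (- / etad) * posp (f s))).
  - intros s; unfold soc_rate; ring.
  - exact (ex_RInt_lincomb _ _ _ _ _ _ (ex_RInt_negp _ _ _ Hf) (ex_RInt_posp _ _ _ Hf)).
Qed.

Section PiecewiseConstant.

Variables (K : nat) (dt : R).
Hypothesis dt_gt0 : 0 < dt.

Lemma ex_RInt_of_cells (F : R -> R) t :
  (forall k, (1 <= k <= K)%nat -> ex_RInt F ((INR k - 1) * dt) (INR k * dt)) ->
  0 <= t <= INR K * dt -> ex_RInt F 0 t.
Proof.
  intros HF Ht.
  assert (Hn : forall n, (n <= K)%nat -> ex_RInt F 0 (INR n * dt)).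
  { induction n as [|n IH]; intros Hn.
    - rewrite Rmult_0_l; apply ex_RInt_point.
    - apply (ex_RInt_Chasles F 0 (INR n * dt)); [apply IH; lia|].
      replace (INR n) with (INR (S n) - 1) by (rewrite S_INR; ring).
      apply HF; lia. }
  exact (ex_RInt_Chasles_1 F 0 t _ Ht (Hn K (le_n K))).
Qed.

Lemma in_F_cell_value U f k s : in_F K dt U f -> (1 <= k <= K)%nat ->
  (INR k - 1) * dt < s < INR k * dt -> f s = f ((INR k - 1) * dt).
Proof.
  intros [_ Hconst] Hk Hs; apply (Hconst k Hk); unfold in_Tk; lra.
Qed.

Lemma ex_RInt_soc_integrand etac etad U0 Uu Ud Ux (x0 xu xd xi : R -> R) t :
  in_F K dt U0 x0 -> in_F K dt Uu xu -> in_F K dt Ud xd -> in_Riem K dt Ux xi ->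
  in_horizon K dt t ->
  ex_RInt (fun tau => soc_rate etac etad (xout (x0 tau) (xu tau) (xd tau) (xi tau))) 0 t.
Proof.
  intros H0 Hu Hd [Hxi _] Ht; apply ex_RInt_of_cells; [|exact Ht].
  intros k Hk; set (u := (INR k - 1) * dt).
  assert (Hk1 : 1 <= INR k) by (apply (le_INR 1); lia).
  assert (HkK : INR k <= INR K) by (apply le_INR; lia).
  apply (ex_RInt_ext (fun s => soc_rate etac etad (xout (x0 u) (xu u) (xd u) (xi s)))).
  - intros s Hs; rewrite Rmin_left, Rmax_right in Hs by (unfold u; lra).
    now rewrite (in_F_cell_value _ _ _ _ H0 Hk Hs), (in_F_cell_value _ _ _ _ Hu Hk Hs),
      (in_F_cell_value _ _ _ _ Hd Hk Hs).
  - apply ex_RInt_soc_rate, ex_RInt_xout.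
    apply (ex_RInt_Chasles_2 (V := R_CompleteNormedModule) _ 0); [unfold u; split; nra|].
    apply (ex_RInt_Chasles_1 (V := R_CompleteNormedModule) _ _ _ (INR K * dt));
      [split; nra|exact Hxi].
Qed.

End PiecewiseConstant.

Lemma in_F_comb K dt (U : R -> Prop) f g l :
  (forall a b, U a -> U b -> U (l * a + (1 - l) * b)) ->
  in_F K dt U f -> in_F K dt U g -> in_F K dt U (fun s => l * f s + (1 - l) * g s).
Proof.
  intros HU [Uf Cf] [Ug Cg]; split.
  - intros s Hs; exact (HU _ _ (Uf s Hs) (Ug s Hs)).
  - intros k Hk s u Hs Hu; now rewrite (Cf k Hk s u Hs Hu), (Cg k Hk s u Hs Hu).
Qed.

Lemma in_F_allR_comb K dt f g l :
  in_F K dt allR f -> in_F K dt allR g -> in_F K dt allR (fun s => l * f s + (1 - l) * g s).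
Proof. apply in_F_comb; now intros. Qed.

Lemma in_F_nonnegR_comb K dt f g l : 0 <= l <= 1 ->
  in_F K dt nonnegR f -> in_F K dt nonnegR g ->
  in_F K dt nonnegR (fun s => l * f s + (1 - l) * g s).
Proof. intros Hl; apply in_F_comb; unfold nonnegR; intros; nra. Qed.

Section SocFunctional.

Variables (K : nat) (dt etac etad y0 t : R).
Variables (S : (R -> R) -> Prop) (X : (R -> R) -> R -> R).
Hypotheses (etac_ge0 : 0 <= etac) (etac_le_inv_etad : etac <= / etad) (t_ge0 : 0 <= t).
Hypothesis ex_RInt_rate :
  forall f, S f -> ex_RInt (fun tau => soc_rate etac etad (X f tau)) 0 t.

Let Phi (f : R -> R) : R := y0 + RInt (fun tau => soc_rate etac etad (X f tau)) 0 t.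

Lemma concave_on_soc :
  (forall f g l, S f -> S g -> 0 <= l <= 1 -> S (fun s => l * f s + (1 - l) * g s)) ->
  (forall f g l tau,
     X (fun s => l * f s + (1 - l) * g s) tau = l * X f tau + (1 - l) * X g tau) ->
  concave_on S Phi.
Proof.
  intros S_comb X_comb f g l Sf Sg Hl; unfold Phi.
  replace (l * _ + (1 - l) * _) with
    (y0 + (l * RInt (fun tau => soc_rate etac etad (X f tau)) 0 t
           + (1 - l) * RInt (fun tau => soc_rate etac etad (X g tau)) 0 t)) by ring.
  rewrite <- RInt_lincomb by auto.
  apply Rplus_le_compat_l, RInt_le; auto.
  - apply ex_RInt_lincomb; auto.
  - intros tau _; rewrite X_comb; now apply soc_rate_concave.
Qed.

Lemma nonincreasing_on_soc :
  (forall f g, S f -> S g -> le_on K dt f g -> forall tau, 0 < tau < t -> X f tau <= X g tau) ->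
  nonincreasing_on K dt S Phi.
Proof.
  intros X_le f g Sf Sg Hfg; apply Rplus_le_compat_l, RInt_le; auto.
  intros tau Htau; now apply soc_rate_nonincreasing, X_le.
Qed.

Lemma nondecreasing_on_soc :
  (forall f g, S f -> S g -> le_on K dt f g -> forall tau, 0 < tau < t -> X g tau <= X f tau) ->
  nondecreasing_on K dt S Phi.
Proof.
  intros X_ge f g Sf Sg Hfg; apply Rplus_le_compat_l, RInt_le; auto.
  intros tau Htau; now apply soc_rate_nonincreasing, X_ge.
Qed.

End SocFunctional.

Section Monotonicity.

Variables (K : nat) (dt etac etad y0 t : R).
Hypotheses (dt_gt0 : 0 < dt) (etac_ge0 : 0 <= etac) (etac_le_inv_etad : etac <= / etad)
  (t_horizon : in_horizon K dt t).

Let t_ge0 : 0 <= t := proj1 t_horizon.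

Lemma le_on_inside f g tau : le_on K dt f g -> 0 < tau < t -> f tau <= g tau.
Proof. intros Hfg Htau; apply Hfg; red in t_horizon |- *; lra. Qed.

Lemma soc_concave_nonincreasing_x0 Uu Ud xu xd xi :
  in_F K dt Uu xu -> in_F K dt Ud xd -> in_Riem K dt unit_box xi ->
  concave_on (in_F K dt allR) (fun x0 => soc etac etad x0 xu xd xi y0 t) /\
  nonincreasing_on K dt (in_F K dt allR) (fun x0 => soc etac etad x0 xu xd xi y0 t).
Proof.
  intros Hu Hd Hxi; pose (X f tau := xout (f tau) (xu tau) (xd tau) (xi tau)).
  assert (Hex : forall f, in_F K dt allR f ->
                 ex_RInt (fun tau => soc_rate etac etad (X f tau)) 0 t)
    by (intros f Hf; eapply ex_RInt_soc_integrand; eassumption).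
  split.
  - apply concave_on_soc with (X := X); auto using in_F_allR_comb.
    intros; apply xout_comb_l.
  - apply nonincreasing_on_soc with (X := X); auto.
    intros f g _ _ Hfg tau Htau; apply xout_le_l, (le_on_inside _ _ _ Hfg Htau).
Qed.

Lemma soc_concave_nonincreasing_xu U0 Ud x0 xd xi :
  in_F K dt U0 x0 -> in_F K dt Ud xd -> in_Riem K dt unit_box xi ->
  concave_on (in_F K dt nonnegR) (fun xu => soc etac etad x0 xu xd xi y0 t) /\
  nonincreasing_on K dt (in_F K dt nonnegR) (fun xu => soc etac etad x0 xu xd xi y0 t).
Proof.
  intros H0 Hd Hxi; pose (X f tau := xout (x0 tau) (f tau) (xd tau) (xi tau)).
  assert (Hex : forall f, in_F K dt nonnegR f ->
                 ex_RInt (fun tau => soc_rate etac etad (X f tau)) 0 t)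
    by (intros f Hf; eapply ex_RInt_soc_integrand; eassumption).
  split.
  - apply concave_on_soc with (X := X); auto using in_F_nonnegR_comb.
    intros; apply xout_comb_m.
  - apply nonincreasing_on_soc with (X := X); auto.
    intros f g _ _ Hfg tau Htau; apply xout_le_m, (le_on_inside _ _ _ Hfg Htau).
Qed.

Lemma soc_concave_nondecreasing_xd U0 Uu x0 xu xi :
  in_F K dt U0 x0 -> in_F K dt Uu xu -> in_Riem K dt unit_box xi ->
  concave_on (in_F K dt nonnegR) (fun xd => soc etac etad x0 xu xd xi y0 t) /\
  nondecreasing_on K dt (in_F K dt nonnegR) (fun xd => soc etac etad x0 xu xd xi y0 t).
Proof.
  intros H0 Hu Hxi; pose (X f tau := xout (x0 tau) (xu tau) (f tau) (xi tau)).
  assert (Hex : forall f, in_F K dt nonnegR f ->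
                 ex_RInt (fun tau => soc_rate etac etad (X f tau)) 0 t)
    by (intros f Hf; eapply ex_RInt_soc_integrand; eassumption).
  split.
  - apply concave_on_soc with (X := X); auto using in_F_nonnegR_comb.
    intros; apply xout_comb_r.
  - apply nondecreasing_on_soc with (X := X); auto.
    intros f g _ _ Hfg tau Htau; apply xout_le_r, (le_on_inside _ _ _ Hfg Htau).
Qed.

Lemma soc_nonincreasing_xi U0 x0 xu xd :
  in_F K dt U0 x0 -> in_F K dt nonnegR xu -> in_F K dt nonnegR xd ->
  nonincreasing_on K dt (in_Riem K dt unit_box) (fun xi => soc etac etad x0 xu xd xi y0 t).
Proof.
  intros H0 Hu Hd; pose (X f tau := xout (x0 tau) (xu tau) (xd tau) (f tau)).
  apply nonincreasing_on_soc with (X := X); auto.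
  - intros f Hf; eapply ex_RInt_soc_integrand; eassumption.
  - intros f g _ _ Hfg tau Htau.
    assert (Htau' : in_horizon K dt tau) by (red in t_horizon |- *; lra).
    apply xout_le_s; [apply (proj1 Hu) | apply (proj1 Hd) | apply Hfg]; exact Htau'.
Qed.

End Monotonicity.

Theorem proposition2 (K : nat) (dt etac etad : R) :
  (0 < K)%nat -> 0 < dt -> 0 < etac < 1 -> 0 < etad < 1 ->
  forall (y0 t : R), 0 <= y0 -> in_horizon K dt t ->
  (* in x0, for fixed xu, xd, xi *)
  (forall xu xd xi, in_F K dt nonnegR xu -> in_F K dt nonnegR xd ->
     in_Riem K dt unit_box xi ->
     concave_on (in_F K dt allR) (fun x0 => soc etac etad x0 xu xd xi y0 t) /\
     nonincreasing_on K dt (in_F K dt allR)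
       (fun x0 => soc etac etad x0 xu xd xi y0 t)) /\
  (* in xu *)
  (forall x0 xd xi, in_F K dt allR x0 -> in_F K dt nonnegR xd ->
     in_Riem K dt unit_box xi ->
     concave_on (in_F K dt nonnegR) (fun xu => soc etac etad x0 xu xd xi y0 t) /\
     nonincreasing_on K dt (in_F K dt nonnegR)
       (fun xu => soc etac etad x0 xu xd xi y0 t)) /\
  (* in xd *)
  (forall x0 xu xi, in_F K dt allR x0 -> in_F K dt nonnegR xu ->
     in_Riem K dt unit_box xi ->
     concave_on (in_F K dt nonnegR) (fun xd => soc etac etad x0 xu xd xi y0 t) /\
     nondecreasing_on K dt (in_F K dt nonnegR)
       (fun xd => soc etac etad x0 xu xd xi y0 t)) /\
  (* in xi *)
  (forall x0 xu xd, in_F K dt allR x0 -> in_F K dt nonnegR xu ->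
     in_F K dt nonnegR xd ->
     nonincreasing_on K dt (in_Riem K dt unit_box)
       (fun xi => soc etac etad x0 xu xd xi y0 t)).
Proof.
  intros _ Hdt Hc Hd y0 t _ Ht.
  assert (Hcd : etac <= / etad).
  { apply Rle_trans with 1; [lra|].
    rewrite <- Rinv_1; apply Rinv_le_contravar; lra. }
  assert (Hc0 : 0 <= etac) by lra.
  split; [|split; [|split]]; intros.
  - eapply soc_concave_nonincreasing_x0; eassumption.
  - eapply soc_concave_nonincreasing_xu; eassumption.
  - eapply soc_concave_nondecreasing_xd; eassumption.
  - eapply soc_nonincreasing_xi; eassumption.
Qed.
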